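(* Let $\{(\lambda^\alpha_{i,j})_{i,j\in\mathbb{N}}:\alpha<\omega_1\}$ be a family of real matrices each of which satisfies: (i) $\lim_{i\to\infty}\lambda^\alpha_{i,j}=0$ for every $j\in\mathbb{N}$; (ii) $\sum_{j\in\mathbb{N}}|\lambda^\alpha_{i,j}|<\infty$ for every $i\in\mathbb{N}$; (iii) $\lim_{i\to\infty}\sum_{j\in\mathbb{N}}\lambda^\alpha_{i,j}=1$. Then there exists an almost disjoint family $\mathcal{F}$ such that for every $\alpha<\omega_1$ there is $N'_\alpha\in\mathcal{F}$ for which the sequence $\big(\sum_{j\in N'_\alpha}\lambda^\alpha_{i,j}\big)_{i\in\mathbb{N}}$ does not converge to $0$.
   Context: An almost disjoint family is an infinite family of pairwise almost disjoint infinite subsets of $\mathbb{N}$, where two sets are almost disjoint if their intersection is finite. $\omega_1$ is the first uncountable ordinal. *)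

From HB Require Import structures.
From mathcomp Require Import all_boot all_order all_algebra.
From mathcomp Require Import all_classical all_reals all_analysis.
From mathcomp Require Import Rstruct Rstruct_topology.
From Stdlib Require Import Reals.
Set Implicit Arguments. Unset Strict Implicit. Unset Printing Implicit Defensive.
Import Order.TTheory GRing.Theory Num.Theory.
Local Open Scope classical_set_scope.
Local Open Scope ring_scope.

Definition countable_subset (T : Type) (A : set T) : Prop :=
  exists f : T -> nat, forall x y, A x -> A y -> f x = f y -> x = y.

(* (W, lt) is (order-isomorphic to) the first uncountable ordinal omega_1:
   a strict well-order whose proper initial segments are all countable,
   while W itself is uncountable. *)
Record is_omega1 (W : Type) (lt : W -> W -> Prop) : Prop := {
  om1_irrefl : forall a, ~ lt a a;
  om1_trans : forall a b c, lt a b -> lt b c -> lt a c;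
  om1_total : forall a b, lt a b \/ a = b \/ lt b a;
  om1_wf : well_founded lt;
  om1_segments : forall a, countable_subset [set b | lt b a];
  om1_uncountable : ~ countable_subset [set: W]
}.

Definition almost_disjoint_family (F : set (set nat)) : Prop :=
  infinite_set F /\
  (forall A, F A -> infinite_set A) /\
  (forall A B, F A -> F B -> A <> B -> finite_set (A `&` B)).

Definition rseries_sum (u : nat -> R) : R := limn (series u).

From HB Require Import structures.
From mathcomp Require Import all_boot all_order all_algebra.
From mathcomp Require Import all_classical all_reals all_analysis.
From mathcomp Require Import Rstruct Rstruct_topology.
From mathcomp Require Import lra.
From Stdlib Require Import Reals.
Import Order.TTheory GRing.Theory Num.Theory numFieldNormedType.Exports.
Local Open Scope classical_set_scope.
Local Open Scope ring_scope.

(* Gliding hump: fix one matrix and a countable almost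
   disjoint family E all of whose row sums over members tend to 0.  The finite
   unions C_k of members of E then have the same property, so one can pick rows
   i_k and windows [q_k, q_(k+1)) carrying almost all of the absolute mass of
   row i_k while the row sums of i_k over C_k are small.  The set
   N = U_k ([q_k, q_(k+1)) \ C_k) is almost disjoint from every member of E,
   and its row sums along i_k stay close to 1.  Transfinite recursion: every
   proper initial segment of omega_1 is countable, so at stage alpha the family
   built so far (seeded with the rows of a pairing of nat * nat, which keeps
   the final family infinite) can be enlarged by a set serving matrix alpha. *)

Lemma infinite_range_inj {T : Type} (f : nat -> T) :
  injective f -> infinite_set (range f).
Proof.
move=> f_inj /(finite_preimage (in2W f_inj)); rewrite preimage_range.
exact: infinite_nat.
Qed.

Definition pairwise_almost_disjoint (F : set (set nat)) : Prop :=
  forall A B, F A -> F B -> A <> B -> finite_set (A `&` B).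

Definition ad_compatible (F : set (set nat)) (X : set nat) : Prop :=
  F X \/ forall Y, F Y -> finite_set (X `&` Y).

Lemma pairwise_almost_disjoint_setU1 F X : pairwise_almost_disjoint F ->
  ad_compatible F X -> pairwise_almost_disjoint (F `|` [set X]).
Proof.
move=> F_ad [FX|X_ad]; first by rewrite (setUidPl _ _).2 // => _ ->.
move=> A B [FA|->] [FB|->] AB; [exact: F_ad | | exact: X_ad | by case: AB].
by rewrite setIC; exact: X_ad.
Qed.

Definition pair_block (k : nat) : set nat := range (fun n : nat => pickle (k, n)).

Lemma pair_block_inj : injective pair_block.
Proof.
move=> k l kl; have : pair_block l (pickle (k, 0%nat)) by rewrite -kl; exists 0%nat.
by case=> n _ /(pcan_inj pickleK) [].
Qed.

Lemma pair_block_infinite k : infinite_set (pair_block k).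
Proof. by apply: infinite_range_inj => m n /(pcan_inj pickleK) []. Qed.

Lemma pair_block_disjoint k l : k <> l -> pair_block k `&` pair_block l = set0.
Proof.
move=> kl; apply/seteqP; split => // _ [[m _ <-] [n _ /(pcan_inj pickleK)[lk _]]].
by apply: kl; rewrite lk.
Qed.

Lemma countable_image_enum {T U : Type} (A : set T) (g : T -> U) (B : nat -> U) :
  countable_subset A -> exists e : nat -> U, range e = range B `|` g @` A.
Proof.
move=> [f f_inj].
have /choice[h hP] : forall m, exists u, (range B `|` g @` A) u /\
    forall t, A t -> f t = m -> u = g t.
  move=> m; have [[t At ftm]|none] := pselect (exists2 t, A t & f t = m).
    exists (g t); split=> [|t' At' ft'm]; first by right; exists t.
    by rewrite (f_inj t t') // ftm ft'm.
  exists (B 0%nat); split=> [|t At ftm]; first by left; exists 0%nat.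
  by case: none; exists t.
exists (fun n => if odd n then h n./2 else B n./2); apply/seteqP; split.
  by move=> _ [n _ <-]; case: (odd n); [exact: (hP _).1 | left; exists n./2].
move=> _ [[k _ <-]|[t At <-]]; first by exists k.*2; rewrite // odd_double doubleK.
exists (f t).*2.+1 => //=; rewrite odd_double /= uphalf_double.
by rewrite ((hP _).2 t).
Qed.

Lemma series_window_split {V : zmodType} (f : nat -> V) {p q n : nat} :
  (p <= q)%nat -> (q <= n)%nat ->
  series f n =
    \sum_(0%nat <= j < p) f j + \sum_(p <= j < q) f j + \sum_(q <= j < n) f j.
Proof.
move=> pq qn; rewrite /series /= (big_cat_nat (leq0n p) (leq_trans pq qn)).
by rewrite (big_cat_nat pq qn) /=; exact: addrA.
Qed.

Section restricted_series.
Context {R : realType}.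
Implicit Types (u : nat -> R) (X Y : set nat) (p q : nat).

Definition outer_mass u p q : R :=
  limn (series (fun j => `|u j|)) - \sum_(p <= j < q) `|u j|.

Lemma normr_restrict_le u X j : `|(u \_ X) j| <= `|u j|.
Proof. by rewrite /patch; case: ifP => _; rewrite ?normr0. Qed.

Lemma cvg_series_restrict u X :
  cvgn (series (fun j => `|u j|)) -> cvgn (series (u \_ X)).
Proof.
move=> cu; apply: normed_cvg; apply: series_le_cvg cu => //= j.
exact: normr_restrict_le.
Qed.

Lemma restrict_window_le u X p q : (p <= q)%nat ->
  cvgn (series (fun j => `|u j|)) ->
  `|limn (series (u \_ X)) - \sum_(p <= j < q) (u \_ X) j| <= outer_mass u p q.
Proof.
move=> pq cu; set v := u \_ X.
have sum_le m n : `|\sum_(m <= j < n) v j| <= \sum_(m <= j < n) `|u j|.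
  apply: le_trans (ler_norm_sum _ _ _) _.
  by apply: ler_sum => j _; exact: normr_restrict_le.
have bound n : (q <= n)%nat ->
    `|series v n - \sum_(p <= j < q) v j| <= outer_mass u p q.
  move=> qn.
  have : series (fun j => `|u j|) n <= limn (series (fun j => `|u j|)).
    apply: (nondecreasing_cvgn_le _ cu).
    exact: nondecreasing_series (fun j _ _ => normr_ge0 (u j)).
  rewrite /outer_mass !(series_window_split _ pq qn).
  have := sum_le 0%nat p; have := sum_le q n.
  move: (\sum_(0%nat <= j < p) v j) (\sum_(q <= j < n) v j) => a b.
  rewrite !ler_norml => /andP[? ?] /andP[? ?] ?; apply/andP; split; lra.
have cv : `|series v n - \sum_(p <= j < q) v j| @[n --> \oo] -->
          `|limn (series v) - \sum_(p <= j < q) v j|.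
  by apply: cvg_norm; apply: cvgB; [exact: cvg_series_restrict | exact: cvg_cst].
rewrite -(cvg_lim _ cv) //; apply: limr_le; first exact: cvgP cv.
by near=> n; apply: bound; near: n; exact: nbhs_infty_ge.
Unshelve. all: by end_near.
Qed.

Lemma restrict_complement_window u X Y p q : (p <= q)%nat ->
  cvgn (series (fun j => `|u j|)) ->
  (forall j, (p <= j < q)%nat -> X j <-> ~ Y j) ->
  `|limn (series (u \_ X)) - (limn (series u) - limn (series (u \_ Y)))|
    <= 3 * outer_mass u p q.
Proof.
move=> pq cu XY.
have window : \sum_(p <= j < q) (u \_ X) j =
    \sum_(p <= j < q) u j - \sum_(p <= j < q) (u \_ Y) j.
  rewrite -sumrB; apply: eq_big_nat => j /XY XYj; rewrite /patch.
  case: (pselect (Y j)) => Yj.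
    by rewrite (mem_set Yj) memNset ?subrr // => /XYj.
  by rewrite (memNset Yj) (mem_set (XYj.2 Yj)) subr0.
have := restrict_window_le u X p q pq cu.
have := restrict_window_le u Y p q pq cu.
have := restrict_window_le u setT p q pq cu; rewrite patch_setT window.
rewrite !ler_norml => /andP[? ?] /andP[? ?] /andP[? ?]; apply/andP; split; lra.
Qed.

End restricted_series.

Lemma cvg0_series_prefix {R : realType} (f : nat -> nat -> R) p :
  (forall j, (fun i => f i j) @ \oo --> 0) -> (fun i => series (f i) p) @ \oo --> 0.
Proof.
move=> f0; rewrite [X in _ --> X](_ : 0 = \sum_(0%nat <= j < p) (0 : R)).
  by apply: cvg_big => [|j _]; [exact: add_continuous | exact: f0].
by rewrite big1.
Qed.

(** * The gliding hump *)

Lemma finite_subset_II (X : set nat) : finite_set X -> exists n, X `<=` `I_n.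
Proof.
move=> /finite_seqP[s ->]; exists (\max_(j <- s) j).+1 => j /= js.
by rewrite ltnS; exact: leq_bigmax_seq.
Qed.

Lemma nat_dependent_choice {T : Type} (P : nat -> T -> T -> Prop) (x0 : T) :
  (forall n x, exists y, P n x y) ->
  exists f : nat -> T, f 0%nat = x0 /\ forall n, P n (f n) (f n.+1).
Proof.
move=> exP; have /choice[g gP] : forall nx : nat * T, exists y, P nx.1 nx.2 y.
  by move=> [n x]; exact: exP.
exists (fix f n := if n is n'.+1 then g (n', f n') else x0).
by split => // n; exact: gP (n, _).
Qed.

Definition hump_set (Q : nat -> nat) (C : nat -> set nat) : set nat :=
  [set j | exists k, (Q k <= j < Q k.+1)%nat /\ ~ C k j].

Section hump_set.
Variables (Q : nat -> nat) (C : nat -> set nat).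
Hypothesis Q_homo : {homo Q : m n / (m <= n)%nat}.

Lemma hump_set_block k j : (Q k <= j < Q k.+1)%nat -> hump_set Q C j <-> ~ C k j.
Proof.
move=> /andP[kj jk].
split => [[l [/andP[lj jl] nCl]]|nCk]; last by exists k; rewrite kj jk.
case: (ltngtP l k) => [lk|kl|<- //].
- by have := leq_trans (Q_homo _ _ lk) kj; rewrite leqNgt jl.
- by have := leq_trans (Q_homo _ _ kl) lj; rewrite leqNgt jk.
Qed.

Lemma hump_set_finite_setI n : (forall m n, (m <= n)%nat -> C m `<=` C n) ->
  finite_set (hump_set Q C `&` C n).
Proof.
move=> C_homo; apply: (sub_finite_set _ (finite_II (Q n))).
move=> j [[k [/andP[_ jk] nCk] Cnj]] /=; case: (leqP n k) => [nk|kn].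
  by have := C_homo _ _ nk _ Cnj.
exact: leq_trans jk (Q_homo _ _ kn).
Qed.

End hump_set.

Definition row_sum_on {R : realType} (lam : nat -> nat -> R) (X : set nat)
    (i : nat) : R :=
  limn (series (lam i \_ X)).

Section row_sums.
Context {R : realType} (lam : nat -> nat -> R).
Hypothesis lam_col0 : forall j, (fun i => lam i j) @ \oo --> 0.
Hypothesis lam_abs : forall i, cvgn (series (fun j => `|lam i j|)).
Local Notation S := (row_sum_on lam).
Implicit Types (X Y : set nat).

Lemma row_sum_on_finite_cvg0 X : finite_set X -> S X @ \oo --> 0.
Proof.
move=> /finite_subset_II[b Xb].
have -> : S X = fun i => series (lam i \_ X) b.
  apply/funext => i; apply: norm_lim_near_cst; near=> n.
  apply/eqP; rewrite -subr_eq0 sub_series_geq; last by near: n; exact: nbhs_infty_ge.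
  apply/eqP; rewrite big_nat_cond big1 // => j /andP[/andP[bj _] _].
  by rewrite /patch memNset // => /Xb /=; rewrite ltnNge bj.
apply: cvg0_series_prefix => j.
by rewrite /patch; case: (j \in X); [exact: lam_col0 | exact: cvg_cst].
Unshelve. all: by end_near.
Qed.

Lemma row_sum_on_setU X Y i :
  S (X `|` Y) i = S X i + S Y i - S (X `&` Y) i.
Proof.
have cv Z := cvg_series_restrict (lam i) Z (lam_abs i).
apply/eqP; rewrite eq_sym subr_eq /row_sum_on -!lim_seriesD //.
apply/eqP; congr (limn (series _)); apply/funext => j /=.
rewrite !fctE /patch in_setU in_setI.
case: (pselect (X j)) => Xj; [rewrite (mem_set Xj) | rewrite (memNset Xj)];
  (case: (pselect (Y j)) => Yj; [rewrite (mem_set Yj) | rewrite (memNset Yj)]);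
  by rewrite /= ?addr0 ?add0r.
Qed.

Lemma row_sum_on_setU_cvg0 X Y : finite_set (X `&` Y) ->
  S X @ \oo --> 0 -> S Y @ \oo --> 0 -> S (X `|` Y) @ \oo --> 0.
Proof.
move=> XY X0 Y0.
have -> : S (X `|` Y) = S X + S Y - S (X `&` Y).
  by apply/funext => i; exact: row_sum_on_setU.
have := cvgB (cvgD X0 Y0) (row_sum_on_finite_cvg0 _ XY).
by rewrite addr0 subr0; apply.
Qed.

Hypothesis lam_row1 : (fun i => limn (series (lam i))) @ \oo --> (1 : R).

Lemma exists_hump (C : set nat) e i0 p : 0 < e -> S C @ \oo --> 0 ->
  exists i q, [/\ (i0 < i)%nat, (p <= q)%nat, outer_mass (lam i) p q <= e,
    `|limn (series (lam i)) - 1| <= e & `|S C i| <= e].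
Proof.
move=> e0 C0; have e20 : 0 < e / 2 by rewrite divr_gt0.
have abs0 j : (fun i => `|lam i j|) @ \oo --> 0 by apply/norm_cvg0P.
have [i [i0i head row1 Ci]] : exists i, [/\ (i0 < i)%nat,
    series (fun j => `|lam i j|) p <= e / 2, `|limn (series (lam i)) - 1| <= e
    & `|S C i| <= e].
  apply: (@filter_ex _ \oo); near=> i; split.
  - by near: i; exact: nbhs_infty_gt.
  - near: i; apply: filterS (cvgr0_norm_lt _ (cvg0_series_prefix _ p abs0) _ e20).
    by move=> i /ltW; exact: le_trans (ler_norm _).
  - near: i; apply: filterS (cvgr_dist_le _ _ lam_row1 _ e0) => i.
    by rewrite distrC.
  - near: i; apply: filterS (cvgr_dist_le _ _ C0 _ e0) => i.
    by rewrite sub0r normrN.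
have [q [pq tail]] : exists q, (p <= q)%nat /\
    limn (series (fun j => `|lam i j|)) - series (fun j => `|lam i j|) q <= e / 2.
  apply: (@filter_ex _ \oo); near=> q; split; first by near: q; exact: nbhs_infty_ge.
  near: q; apply: filterS (cvgr_dist_le _ _ (lam_abs i) _ e20) => q.
  exact: le_trans (ler_norm _).
by exists i, q; split => //; rewrite /outer_mass -sub_series_geq //; lra.
Unshelve. all: by end_near.
Qed.

Lemma gliding_hump (C : nat -> set nat) :
  (forall m n, (m <= n)%nat -> C m `<=` C n) -> (forall n, S (C n) @ \oo --> 0) ->
  exists N, (forall n, finite_set (N `&` C n)) /\ ~ S N @ \oo --> 0.
Proof.
move=> C_homo C0; pose e : R := 10^-1.
have e0 : 0 < e by rewrite invr_gt0.
pose hump k (x y : nat * nat) := [/\ (x.1 < y.1)%nat, (x.2 <= y.2)%nat,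
  outer_mass (lam y.1) x.2 y.2 <= e, `|limn (series (lam y.1)) - 1| <= e
  & `|S (C k) y.1| <= e].
have [f [_ f_hump]] :
    exists f, f 0%nat = (0, 0)%nat /\ forall k, hump k (f k) (f k.+1).
  apply: nat_dependent_choice => k [i0 p].
  by have [i [q hq]] := exists_hump (C k) e i0 p e0 (C0 k); exists (i, q).
pose Q k := (f k).2; pose I k := (f k.+1).1.
have Q_homo : {homo Q : m n / (m <= n)%nat}.
  by apply: homo_leq leqnn leq_trans _ => k; case: (f_hump k).
have I_ge k : (k <= I k)%nat.
  have f1_ge n : (n <= (f n).1)%nat.
    by elim: n => // n IH; case: (f_hump n) => lt _ _ _ _; exact: leq_ltn_trans IH lt.
  exact: leq_trans (leqnSn k) (f1_ge k.+1).
exists (hump_set Q C); split; first by move=> n; exact: hump_set_finite_setI.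
(* On row [I k] the sum over [hump_set Q C] is within [3 e] of the full row
   sum minus the sum over [C k]; these two are within [e] of [1] and [0], and
   [1 - 5 e = 1/2]. *)
have half k : 2^-1 <= S (hump_set Q C) (I k).
  case: (f_hump k); rewrite -/(I k) -/(Q k) -/(Q k.+1) => _ Qk out row1 Ck.
  have := restrict_complement_window (lam (I k)) (hump_set Q C) (C k) (Q k) (Q k.+1)
    Qk (lam_abs _) (fun j hj => hump_set_block Q C Q_homo k j hj).
  move: out row1 Ck; rewrite /S /row_sum_on /e !ler_norml.
  move=> ? /andP[? ?] /andP[? ?] /andP[? ?]; lra.
move=> hump0; have half_gt0 : 0 < 2^-1 :> R by rewrite invr_gt0.
have [n0 _ n0P] := cvgr0_norm_lt _ hump0 _ half_gt0.
have := n0P _ (I_ge n0); have := half n0.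
have := ler_norm (S (hump_set Q C) (I n0)); lra.
Qed.

Lemma countable_extension (e : nat -> set nat) :
  pairwise_almost_disjoint (range e) -> (forall n, S (e n) @ \oo --> 0) ->
  exists N, ~ S N @ \oo --> 0 /\ forall n, finite_set (N `&` e n).
Proof.
move=> e_ad e0; pose C n := [set j | exists2 m, (m <= n)%nat & e m j].
have C_homo m n : (m <= n)%nat -> C m `<=` C n.
  by move=> mn j [k km ekj]; exists k => //; exact: leq_trans km mn.
have C_succ n : C n.+1 = C n `|` e n.+1.
  apply/seteqP; split => j.
    move=> [k]; rewrite leq_eqVlt => /orP[/eqP-> | kn ekj]; first by right.
    by left; exists k.
  by move=> [[k kn ekj]|enj]; [exists k => //; exact: leqW | exists n.+1].
have C0 n : S (C n) @ \oo --> 0.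
  elim: n => [|n IH].
    rewrite (_ : C 0%nat = e 0%nat) //; apply/seteqP; split => j.
      by move=> [k]; rewrite leqn0 => /eqP->.
    by exists 0%nat.
  rewrite C_succ.
  have [[m mn em]|new] := pselect (exists2 m, (m <= n)%nat & e m = e n.+1).
    by rewrite (setUidPl _ _).2 // => j enj; exists m; rewrite // em.
  apply: row_sum_on_setU_cvg0 => //.
  apply: (sub_finite_set _ (bigcup_finite (finite_II n.+1)
    (F := fun m => e m `&` e n.+1) _)).
    by move=> j [[m mn emj] enj]; exists m.
  move=> m /= mn; apply: e_ad; [exact: imageT | exact: imageT |].
  by move=> em; apply: new; exists m.
have [N [NC N0]] := gliding_hump C C_homo C0.
exists N; split => // n; apply: sub_finite_set (NC n) => j [Nj enj].
by split => //; exists n.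
Qed.

Lemma row_sum_on_extension (e : nat -> set nat) :
  pairwise_almost_disjoint (range e) ->
  exists X, ~ S X @ \oo --> 0 /\ ad_compatible (range e) X.
Proof.
move=> e_ad; have [[n en]|all0] := pselect (exists n, ~ S (e n) @ \oo --> 0).
  by exists (e n); split => //; left; exact: imageT.
have [n|N [N0 Ne]] := countable_extension e e_ad.
  by apply: contrapT => en; apply: all0; exists n.
by exists N; split => //; right => _ [n _ <-].
Qed.

End row_sums.

(** * Transfinite recursion along a well-order with countable segments *)

Section almost_disjoint_recursion.
Variables (W : Type) (ltW : W -> W -> Prop).
Hypothesis ltW_wf : well_founded ltW.
Hypothesis ltW_total : forall a b, ltW a b \/ a = b \/ ltW b a.
Hypothesis ltW_segments : forall a, countable_subset [set b | ltW b a].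
Variables (B : nat -> set nat) (P : W -> set nat -> Prop).
Hypothesis B_inj : injective B.
Hypothesis B_infinite : forall k, infinite_set (B k).
Hypothesis B_almost_disjoint : forall k l, k <> l -> finite_set (B k `&` B l).
Hypothesis P_infinite : forall a X, P a X -> infinite_set X.
Hypothesis P_extend : forall a (e : nat -> set nat),
  pairwise_almost_disjoint (range e) -> exists X, P a X /\ ad_compatible (range e) X.

(* [xget] returns [set0] when no admissible set exists; [selected_spec] shows
   that one always does. *)
Definition selected : W -> set nat := Fix ltW_wf (fun=> set nat) (fun a rec =>
  xget set0 [set X | P a X /\
    ad_compatible (range B `|` [set X | exists b (ba : ltW b a), X = rec b ba]) X]).

Definition stages (D : set W) : set (set nat) := range B `|` selected @` D.

Lemma selectedE a : selected a =
  xget set0 [set X | P a X /\ ad_compatible (stages [set b | ltW b a]) X].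
Proof.
rewrite /selected Fix_eq -/selected; last first.
  move=> c f g fg; congr (xget _ _).
  by rewrite (functional_extensionality_dep
    (fun b => functional_extensionality_dep (fg b))).
suff -> : [set X | exists b (ba : ltW b a), X = selected b] =
    selected @` [set b | ltW b a] by [].
apply/seteqP; split; first by move=> _ [b [ba ->]]; exists b.
by move=> _ [b ba <-]; exists b, ba.
Qed.

Lemma selected_spec a : pairwise_almost_disjoint (stages [set b | ltW b a]) ->
  P a (selected a) /\ ad_compatible (stages [set b | ltW b a]) (selected a).
Proof.
move=> stages_ad; have [e eE] := countable_image_enum _ selected B (ltW_segments a).
rewrite selectedE; apply: (@xgetPex _ set0 [set X | P a X /\ ad_compatible _ X]).
by rewrite /stages -eE; apply: P_extend; rewrite eE.
Qed.

Definition upto (a : W) : set (set nat) :=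
  stages [set b | ltW b a] `|` [set selected a].

Lemma stages_pairwise D : (forall c, D c -> pairwise_almost_disjoint (upto c)) ->
  pairwise_almost_disjoint (stages D).
Proof.
move=> D_ad X Y [[k _ <-]|[b1 b1D <-]] [[l _ <-]|[b2 b2D <-]] XY.
- by apply: B_almost_disjoint => kl; apply: XY; rewrite kl.
- by apply: (D_ad b2 b2D) XY; [left; left; exists k | right].
- by apply: (D_ad b1 b1D) XY; [right | left; left; exists l].
- case: (ltW_total b1 b2) => [b12|[b12|b21]].
  + by apply: (D_ad b2 b2D) XY; [left; right; exists b1 | right].
  + by case: XY; rewrite b12.
  + by apply: (D_ad b1 b1D) XY; [right | left; right; exists b2].
Qed.

Lemma upto_pairwise a : pairwise_almost_disjoint (upto a).
Proof.
elim/(well_founded_ind ltW_wf): a => a IH.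
have stages_ad := stages_pairwise [set b | ltW b a] IH.
exact: pairwise_almost_disjoint_setU1 stages_ad (selected_spec a stages_ad).2.
Qed.

Lemma P_selected a : P a (selected a).
Proof.
exact: (selected_spec a (stages_pairwise _ (fun b _ => upto_pairwise b))).1.
Qed.

Theorem almost_disjoint_family_meeting_requirements :
  exists F, almost_disjoint_family F /\ forall a, exists X, F X /\ P a X.
Proof.
exists (stages setT); split; last first.
  by move=> a; exists (selected a); split; [right; exists a | exact: P_selected].
split; [|split].
- apply: (sub_infinite_set _ (infinite_range_inj B B_inj)) => _ [k _ <-].
  by left; exists k.
- move=> X [[k _ <-]|[a _ <-]]; first exact: B_infinite.
  exact: P_infinite (P_selected a).
- exact: stages_pairwise (fun c _ => upto_pairwise c).
Qed.

End almost_disjoint_recursion.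

Theorem lemma4p12 (W : Type) (ltW : W -> W -> Prop) (hW : is_omega1 ltW)
  (lam : W -> nat -> nat -> R)
  (h1 : forall a j, (fun i => lam a i j) @ \oo --> (0 : R))
  (h2 : forall a i, cvgn (series (fun j => `|lam a i j|)))
  (h3 : forall a, (fun i => rseries_sum (lam a i)) @ \oo --> (1 : R)) :
  exists F : set (set nat), almost_disjoint_family F /\
    forall a, exists N' : set nat, F N' /\
      ~ ((fun i => rseries_sum (fun j => if j \in N' then lam a i j else 0))
           @ \oo --> (0 : R)).
Proof.
(* [row_sum_on (lam a) X i] is the row sum of the statement: [lam a i \_ X] is
   [0] off [X], as [point] is [0] in [R]. *)
apply: (almost_disjoint_family_meeting_requirements _ _ (om1_wf hW) (om1_total hW)
  (om1_segments hW) _ (fun a X => ~ row_sum_on (lam a) X @ \oo --> 0)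
  pair_block_inj pair_block_infinite).
- by move=> k l kl; rewrite pair_block_disjoint.
- by move=> a X X0 /(row_sum_on_finite_cvg0 (lam a) (h1 a)).
- by move=> a e; exact: row_sum_on_extension (h1 a) (h2 a) (h3 a) e.
Qed.
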